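(* Let $L\geq 2$ and let $\mathcal{Z}(\lambda_1,\dots,\lambda_L)=\langle\bar 0|\mathcal{B}(\lambda_1)\cdots\mathcal{B}(\lambda_L)|0\rangle$ be the partition function of the six-vertex model with one reflecting end and domain-wall boundaries (see context). Then $\mathcal{Z}$ vanishes whenever $\lambda_1=\mu_1-\gamma$ and $\lambda_2=\mu_1$ (with $\lambda_3,\dots,\lambda_L$ arbitrary). The same holds when $\lambda_1=\mu_1-\gamma$ and $\lambda_2=-\mu_1-\gamma$.
   Context: Parameters $\gamma,h,\mu_1,\dots,\mu_L\in\mathbb{C}$. Set $a(\lambda)=\sinh(\lambda+\gamma)$, $b(\lambda)=\sinh(\lambda)$, $c(\lambda)=\sinh(\gamma)$. The $R$-matrix $\mathcal{R}(\lambda)\in\mathrm{End}(\mathbb{C}^2\otimes\mathbb{C}^2)$ is, in the basis $e_1\otimes e_1,e_1\otimes e_2,e_2\otimes e_1,e_2\otimes e_2$, the matrix with rows $(a,0,0,0)$, $(0,b,c,0)$, $(0,c,b,0)$, $(0,0,0,a)$ evaluated at $\lambda$. Let $\mathbb{V}_0\cong\mathbb{C}^2$ and $\mathbb{V}_{\mathcal{Q}}=(\mathbb{C}^2)^{\otimes L}$; $\mathcal{R}_{0j}$ acts on $\mathbb{V}_0$ and the $j$-th factor of $\mathbb{V}_{\mathcal{Q}}$. Define $\tau(\lambda)=\mathcal{R}_{0L}(\lambda-\mu_L)\cdots\mathcal{R}_{01}(\lambda-\mu_1)$, $\bar\tau(\lambda)=\mathcal{R}_{01}(\lambda+\mu_1)\cdots\mathcal{R}_{0L}(\lambda+\mu_L)$,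 $\mathcal{K}(\lambda)=\mathrm{diag}(\sinh(h+\lambda),\sinh(h-\lambda))$ on $\mathbb{V}_0$, and $\mathcal{T}(\lambda)=\tau(\lambda)\mathcal{K}(\lambda)\bar\tau(\lambda)=\begin{pmatrix}\mathcal{A}(\lambda)&\mathcal{B}(\lambda)\\ \mathcal{C}(\lambda)&\mathcal{D}(\lambda)\end{pmatrix}$ in $\mathbb{V}_0$, with entries in $\mathrm{End}(\mathbb{V}_{\mathcal{Q}})$. Let $|0\rangle=e_1^{\otimes L}$ and $\langle\bar 0|$ the transpose of $e_2^{\otimes L}$, $e_1=(1,0)^T$, $e_2=(0,1)^T$. *)

From Stdlib Require Import Reals.
From mathcomp Require Import all_boot all_algebra.
From mathcomp Require Import complex Rstruct.
Set Implicit Arguments. Unset Strict Implicit. Unset Printing Implicit Defensive.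
Import GRing.Theory.
Local Open Scope ring_scope.

Definition C := complex Rdefinitions.R.

Definition csinh (z : C) : C :=
  Complex (Rtrigo_def.sinh (Re z) * Rtrigo_def.cos (Im z))
          (Rtrigo_def.cosh (Re z) * Rtrigo_def.sin (Im z)).

(* Operators on a finite-dimensional space with basis indexed by a finType T,
   given by their matrix entries. *)
Definition op (T : finType) := T -> T -> C.
Definition opmul (T : finType) (A B : op T) : op T :=
  fun i k => \sum_(j : T) A i j * B j k.
Definition opid (T : finType) : op T := fun i j => (i == j)%:R.

(* Basis of C^2: index 0 = e_1, index 1 = e_2.
   Basis of V_Q = (C^2)^{\otimes L}: functions 'I_L -> 'I_2.
   Basis of V_0 \otimes V_Q: pairs. *)
Definition stQ (L : nat) := {ffun 'I_L -> 'I_2}.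
Definition stF (L : nat) := ('I_2 * stQ L)%type.

(* The R-matrix on C^2 \otimes C^2; entry at ((x,y),(x',y')) where the pair
   (x,y) denotes e_{x+1} \otimes e_{y+1}. Rows (a,0,0,0),(0,b,c,0),(0,c,b,0),(0,0,0,a). *)
Definition Rmat (g lam : C) (x y x' y' : 'I_2) : C :=
  if (x == y) then (if (x' == x) && (y' == y) then csinh (lam + g) else 0)
  else if (x' == x) && (y' == y) then csinh lam
  else if (x' == y) && (y' == x) then csinh g
  else 0.

Definition R0 (L : nat) (g : C) (j : 'I_L) (lam : C) : op (stF L) :=
  fun u v =>
    if [forall k, (k != j) ==> (u.2 k == v.2 k)]
    then Rmat g lam u.1 (u.2 j) v.1 (v.2 j) else 0.

Definition Kop (L : nat) (h lam : C) : op (stF L) :=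
  fun u v =>
    if (u == v) then (if u.1 == 0 then csinh (h + lam) else csinh (h - lam))
    else 0.

(* mu is indexed from 0: mu_1, ..., mu_L are mu 0, ..., mu (L-1). *)
(* tau(lam) = R_{0L}(lam - mu_L) ... R_{01}(lam - mu_1) *)
Definition tau (L : nat) (g : C) (mu : nat -> C) (lam : C) : op (stF L) :=
  foldr (fun j acc => opmul (R0 g j (lam - mu j)) acc) (@opid _) (rev (enum 'I_L)).

(* taubar(lam) = R_{01}(lam + mu_1) ... R_{0L}(lam + mu_L) *)
Definition taubar (L : nat) (g : C) (mu : nat -> C) (lam : C) : op (stF L) :=
  foldr (fun j acc => opmul (R0 g j (lam + mu j)) acc) (@opid _) (enum 'I_L).

Definition monodromy (L : nat) (g h : C) (mu : nat -> C) (lam : C) : op (stF L) :=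
  opmul (tau g mu lam) (opmul (@Kop L h lam) (taubar g mu lam)).

(* B(lam): the (1,2) block in V_0, an operator on V_Q *)
Definition Bop (L : nat) (g h : C) (mu : nat -> C) (lam : C) : op (stQ L) :=
  fun s s' => monodromy g h mu lam (0, s) (1, s').

(* |0> = e_1^{\otimes L},  <bar 0| = (e_2^{\otimes L})^T *)
Definition vac (L : nat) : stQ L := [ffun _ => 0].
Definition bvac (L : nat) : stQ L := [ffun _ => 1].

Definition Zpf (L : nat) (g h : C) (mu lam : nat -> C) : C :=
  (foldr (fun i acc => opmul (Bop g h mu (lam i)) acc) (@opid _) (iota 0 L))
    (bvac L) (vac L).

(* Write <bar0| B(lambda_1) B(lambda_2) |q>, with the double rows restricted to
   the first k sites, as a vector in the 16-dimensional space of auxiliary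
   indices of the two double rows.  Adding site j multiplies it by a transfer
   matrix that depends only on mu_j and q_j.  For lambda_1 = mu_1 - gamma the
   R-matrix R(lambda_1 - mu_1) = R(-gamma) degenerates (a = 0): after the first site
   the vector lies in the span of two explicit vectors; when moreover
   lambda_2 = mu_1 or lambda_2 = -mu_1 - gamma, this plane is invariant under
   the transfer matrix of every further site, whatever mu_j.  Neither spanning
   vector has a component on the entry read off by B(lambda_1) B(lambda_2), so
   <bar0| B(lambda_1) B(lambda_2) = 0 and Z vanishes. *)

From mathcomp Require Import all_boot all_algebra.
From mathcomp Require Import complex Rstruct.
From mathcomp.algebra_tactics Require Import ring.
From Stdlib Require Import FunctionalExtensionality.
Import GRing.Theory.
Local Open Scope ring_scope.

Definition cexp (z : C) : C :=
  Complex (Rtrigo_def.exp (Re z) * Rtrigo_def.cos (Im z))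
          (Rtrigo_def.exp (Re z) * Rtrigo_def.sin (Im z)).

Lemma cexpD a b : cexp (a + b) = cexp a * cexp b.
Proof.
case: a => a1 a2; case: b => b1 b2; rewrite /cexp /=.
rewrite Exp_prop.exp_plus -!RplusE cosD sinD !RmultE [RHS]/GRing.mul /=.
by congr Complex; ring.
Qed.

Lemma cexp0 : cexp 0 = 1.
Proof.
rewrite /cexp /= Rtrigo_def.exp_0 Rtrigo_def.cos_0 Rtrigo_def.sin_0.
by congr Complex; [exact: RIneq.Rmult_1_r | exact: RIneq.Rmult_0_r].
Qed.

Lemma cexpNK a : cexp (- a) * cexp a = 1.
Proof. by rewrite -cexpD addNr cexp0. Qed.

Lemma cexp_neq0 a : cexp a != 0.
Proof. by apply: contra_eq_neq (cexpNK a) => ->; rewrite mulr0 eq_sym oner_neq0. Qed.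

Lemma cexpN a : cexp (- a) = (cexp a)^-1.
Proof. by apply: (mulIf (cexp_neq0 a)); rewrite cexpNK mulVf ?cexp_neq0. Qed.

Lemma csinhE z : csinh z = (cexp z - (cexp z)^-1) / 2.
Proof.
have csinh2 : 2 * csinh z = cexp z - cexp (- z).
  case: z => x y; rewrite /csinh /cexp /=.
  rewrite /Rtrigo_def.sinh /Rtrigo_def.cosh Rtrigo1.cos_neg Rtrigo1.sin_neg.
  rewrite /GRing.mul /GRing.add /GRing.opp /=.
  rewrite ?RmultE ?RminusE ?RplusE ?RdivE ?RoppE ?RinvE.
  have -> : Rdefinitions.IZR (BinNums.Zpos (BinNums.xO BinNums.xH)) = 1 + 1 by [].
  by congr Complex; field.
by rewrite -cexpN -csinh2; field.
Qed.

(* Every [csinh] becomes a rational function of the exponentials of the free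
   variables, where [field] decides hyperbolic identities. *)
Ltac sinh_field :=
  rewrite ?csinhE; do 3 rewrite ?cexpD ?cexpN; field; by rewrite ?cexp_neq0.

(* Ordinals on which [==] and [match] compute under [simpl]. *)
Definition i0 : 'I_2 := @Ordinal 2 0 isT.
Definition i1 : 'I_2 := @Ordinal 2 1 isT.

Lemma ord2P (x : 'I_2) : x = i0 \/ x = i1.
Proof. by case: x => [[|[|//]] p]; [left | right]; apply: val_inj. Qed.

Lemma sum_ord2 (F : 'I_2 -> C) : \sum_(x : 'I_2) F x = F i0 + F i1.
Proof. by rewrite !big_ord_recl big_ord0 addr0; congr (F _ + F _); apply: val_inj. Qed.

Lemma opmulA (T : finType) (A B D : op T) : opmul A (opmul B D) = opmul (opmul A B) D.
Proof.
apply: functional_extensionality => i; apply: functional_extensionality => k.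
rewrite /opmul; under eq_bigr do rewrite big_distrr /=.
rewrite exchange_big /=; apply: eq_bigr => l _; rewrite big_distrl /=.
by apply: eq_bigr => j _; rewrite mulrA.
Qed.

Lemma opmul1l (T : finType) (A : op T) : opmul (@opid T) A = A.
Proof.
apply: functional_extensionality => i; apply: functional_extensionality => k.
rewrite /opmul /opid (bigD1 i) //= eqxx mul1r big1 ?addr0 // => j.
by rewrite eq_sym => /negbTE ->; rewrite mul0r.
Qed.

Lemma opmul1r (T : finType) (A : op T) : opmul A (@opid T) = A.
Proof.
apply: functional_extensionality => i; apply: functional_extensionality => k.
rewrite /opmul /opid (bigD1 k) //= eqxx mulr1 big1 ?addr0 // => j /negbTE ->.
by rewrite mulr0.
Qed.

Lemma foldr_opmul_rcons (T : finType) (I : Type) (X : I -> op T) s j :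
  foldr (fun i acc => opmul (X i) acc) (@opid T) (rcons s j) =
  opmul (foldr (fun i acc => opmul (X i) acc) (@opid T) s) (X j).
Proof.
elim: s => [|i s IH] /=; first by rewrite opmul1l opmul1r.
by rewrite IH opmulA.
Qed.

Section MonodromyOn.

Context {L : nat}.
Variables (g h : C) (mu : nat -> C).

Definition tau_on (lam : C) (s : seq 'I_L) : op (stF L) :=
  foldr (fun j acc => opmul (R0 g j (lam - mu j)) acc) (@opid _) (rev s).

Definition taubar_on (lam : C) (s : seq 'I_L) : op (stF L) :=
  foldr (fun j acc => opmul (R0 g j (lam + mu j)) acc) (@opid _) s.

Definition monodromy_on (lam : C) (s : seq 'I_L) : op (stF L) :=
  opmul (tau_on lam s) (opmul (Kop h lam) (taubar_on lam s)).

Lemma monodromy_on_nil lam : monodromy_on lam [::] = Kop h lam.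
Proof. by rewrite /monodromy_on /tau_on /taubar_on /= opmul1l opmul1r. Qed.

Lemma monodromy_on_rcons lam s j :
  monodromy_on lam (rcons s j) =
  opmul (R0 g j (lam - mu j)) (opmul (monodromy_on lam s) (R0 g j (lam + mu j))).
Proof.
by rewrite /monodromy_on /tau_on /taubar_on rev_rcons /= foldr_opmul_rcons !opmulA.
Qed.

End MonodromyOn.

Section SiteSurgery.

Context {L : nat}.

Definition set_site (u : stQ L) (j : 'I_L) (c : 'I_2) : stQ L :=
  [ffun k => if k == j then c else u k].

Definition flip (c : 'I_2) : 'I_2 := if c == i0 then i1 else i0.

Definition flip_site (u : stQ L) (j : 'I_L) : stQ L :=
  [ffun k => if k == j then flip (u k) else u k].

Lemma flipK : involutive flip.
Proof. by move=> c; case: (ord2P c) => ->. Qed.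

Lemma flip_siteK (j : 'I_L) : involutive (flip_site^~ j).
Proof. by move=> u; apply/ffunP => k; rewrite !ffunE; case: eqP => // _; rewrite flipK. Qed.

Lemma flip_site_inj (j : 'I_L) : injective (flip_site^~ j).
Proof. exact: inv_inj (flip_siteK j). Qed.

Lemma flip_site_at (u : stQ L) j : flip_site u j j = flip (u j).
Proof. by rewrite ffunE eqxx. Qed.

Lemma set_site_id (u : stQ L) j : set_site u j (u j) = u.
Proof. by apply/ffunP => k; rewrite ffunE; case: eqP => // ->. Qed.

Lemma set_flip_site (u : stQ L) j c : set_site (flip_site u j) j c = set_site u j c.
Proof. by apply/ffunP => k; rewrite !ffunE; case: eqP. Qed.

Lemma bvac_at (j : 'I_L) : bvac L j = i1.
Proof. by rewrite ffunE; apply: val_inj. Qed.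

Lemma set_site_bvac (j : 'I_L) : set_site (bvac L) j i1 = bvac L.
Proof. by rewrite -(bvac_at j) set_site_id. Qed.

Lemma sum_agree_off (u : stQ L) (j : 'I_L) (G : 'I_2 -> stQ L -> C) :
  \sum_(w : stQ L) (if [forall k, (k != j) ==> (u k == w k)] then G (w j) w else 0) =
  \sum_(c : 'I_2) G c (set_site u j c).
Proof.
rewrite [RHS](eq_bigr (fun c => \sum_(w : stQ L) if w == set_site u j c then G c w else 0));
  last by move=> c _; rewrite -big_mkcond big_pred1_eq.
rewrite exchange_big /=; apply: eq_bigr => w _.
case: ifP => agree.
- have ew : w = set_site u j (w j).
    apply/ffunP => k; rewrite ffunE; case: eqP => [-> // | /eqP nk].
    by have := forallP agree k; rewrite nk => /eqP.
  rewrite (bigD1 (w j)) //= -ew eqxx big1 ?addr0 // => c nc.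
  case: eqP => // ew2; move: nc; have := congr1 (fun f : stQ L => f j) ew2.
  by rewrite /= ffunE eqxx => ->; rewrite eqxx.
- rewrite big1 // => c _; case: eqP => // ew.
  move: agree; rewrite ew => /negbT/negP; case; apply/forallP => k.
  by apply/implyP => nk; rewrite ffunE (negbTE nk).
Qed.

Lemma sum_split_site (j : 'I_L) (F : 'I_2 -> stQ L -> C) :
  (forall t (p : stQ L), p j != i1 -> F t p = 0) ->
  \sum_(p : stQ L) F (p j) (set_site p j i1) = \sum_(p : stQ L) \sum_(t : 'I_2) F t p.
Proof.
move=> F0.
rewrite (bigID (fun p : stQ L => p j == i1)) /=.
rewrite [X in _ + X](reindex_inj (@flip_site_inj j)) /=.
rewrite [RHS](bigID (fun p : stQ L => p j == i1)) /=.
rewrite [X in _ = _ + X]big1 ?addr0; last by move=> p np; rewrite big1 // => t _; rewrite F0.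
rewrite [X in _ + X](eq_bigl (fun p : stQ L => p j == i1)); last first.
  by move=> p; rewrite flip_site_at; case: (ord2P (p j)) => ->.
rewrite -big_split /=; apply: eq_bigr => p /eqP pj.
rewrite sum_ord2 addrC flip_site_at pj set_flip_site /=.
by rewrite -[in set_site p j i1]pj set_site_id.
Qed.

End SiteSurgery.

Section TrivialAtSite.

Context {L : nat}.
Variables (g : C) (j : 'I_L).

Definition trivial_at (X : op (stF L)) :=
  (forall x y (u v : stQ L), u j != v j -> X (x, u) (y, v) = 0) /\
  (forall x y (u v : stQ L), X (x, flip_site u j) (y, flip_site v j) = X (x, u) (y, v)).

Lemma trivial_at_mul X Y : trivial_at X -> trivial_at Y -> trivial_at (opmul X Y).
Proof.
move=> [X0 Xflip] [Y0 Yflip]; split => [x y u v nuv | x y u v]; rewrite /opmul.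
  apply: big1 => -[z w] _; have [e | ne] := eqVneq (u j) (w j).
    by rewrite Y0 ?mulr0 // -e.
  by rewrite X0 ?mul0r.
rewrite (reindex_inj (h := fun w : stF L => (w.1, flip_site w.2 j))); last first.
  by move=> [a b] [c d] /= [-> /flip_site_inj ->].
by apply: eq_bigr => -[z w] _ /=; rewrite Xflip Yflip.
Qed.

Lemma trivial_at_opid : trivial_at (@opid (stF L)).
Proof.
split=> [x y u v nuv | x y u v]; rewrite /opid.
  by case: eqP => // -[_ e]; rewrite e eqxx in nuv.
by rewrite !xpair_eqE (inj_eq (@flip_site_inj L j)).
Qed.

Lemma trivial_at_Kop h lam : trivial_at (Kop h lam).
Proof.
split=> [x y u v nuv | x y u v]; rewrite /Kop.
  by case: eqP => // -[_ e]; rewrite e eqxx in nuv.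
by rewrite !xpair_eqE (inj_eq (@flip_site_inj L j)).
Qed.

Lemma trivial_at_R0 i lam : i != j -> trivial_at (R0 g i lam).
Proof.
move=> nij; split=> [x y u v nuv | x y u v]; rewrite /R0 /=.
  by case: ifP => // /forallP /(_ j); rewrite eq_sym nij (negbTE nuv).
rewrite !ffunE (negbTE nij); congr (if _ then _ else _).
apply: eq_forallb => k; rewrite !ffunE.
case: (k == i) => //=; case: (k == j) => //.
by case: (ord2P (u k)) => ->; case: (ord2P (v k)) => ->.
Qed.

Lemma trivial_at_foldr (f : 'I_L -> C) (s : seq 'I_L) :
  j \notin s -> trivial_at (foldr (fun i acc => opmul (R0 g i (f i)) acc) (@opid _) s).
Proof.
elim: s => [_ | i s IH] /=; first exact: trivial_at_opid.
rewrite inE negb_or => /andP [nji njs].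
by apply: trivial_at_mul; [apply: trivial_at_R0; rewrite eq_sym | apply: IH].
Qed.

Lemma trivial_at_monodromy_on h mu lam (s : seq 'I_L) :
  j \notin s -> trivial_at (monodromy_on g h mu lam s).
Proof.
move=> njs; apply: trivial_at_mul; first by apply: trivial_at_foldr; rewrite mem_rev.
by apply: trivial_at_mul; [apply: trivial_at_Kop | apply: trivial_at_foldr].
Qed.

Lemma trivial_at_set_site X : trivial_at X -> forall x y (u v : stQ L) c c',
  X (x, set_site u j c) (y, set_site v j c') =
  (c == c')%:R * X (x, set_site u j i1) (y, set_site v j i1).
Proof.
move=> [X0 Xflip] x y u v c c'; have [<- | ncc] := eqVneq c c'; last first.
  by rewrite X0 ?mul0r // !ffunE !eqxx.
rewrite mul1r; case: (ord2P c) => -> //.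
by rewrite -Xflip; congr (X (_, _) (_, _)); apply/ffunP => k; rewrite !ffunE; case: eqP.
Qed.

End TrivialAtSite.

Arguments trivial_at_set_site {L j X}.

Lemma sum_pair (A B : finType) (F : A * B -> C) :
  \sum_(w : A * B) F w = \sum_(a : A) \sum_(b : B) F (a, b).
Proof. by rewrite pair_bigA; apply: eq_bigr => -[a b]. Qed.

Section SingleSite.

Context {L : nat}.
Variables (g : C) (j : 'I_L).

Lemma sum_R0l lam x u (F : stF L -> C) :
  \sum_(w : stF L) R0 g j lam (x, u) w * F w =
  \sum_(x' : 'I_2) \sum_(c : 'I_2) Rmat g lam x (u j) x' c * F (x', set_site u j c).
Proof.
rewrite sum_pair; apply: eq_bigr => x' _.
rewrite -(sum_agree_off u j (fun c w => Rmat g lam x (u j) x' c * F (x', w))).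
by apply: eq_bigr => w _; rewrite /R0 /=; case: ifP; rewrite ?mul0r.
Qed.

Lemma sum_R0r lam y v (F : stF L -> C) :
  \sum_(w : stF L) F w * R0 g j lam w (y, v) =
  \sum_(y' : 'I_2) \sum_(c : 'I_2) F (y', set_site v j c) * Rmat g lam y' c y (v j).
Proof.
rewrite sum_pair; apply: eq_bigr => y' _.
rewrite -(sum_agree_off v j (fun c w => F (y', w) * Rmat g lam y' c y (v j))).
apply: eq_bigr => w _; rewrite /R0 /=.
rewrite (eq_forallb (fun k => congr1 (implb _) (eq_sym (w k) (v k)))).
by case: ifP; rewrite ?mulr0.
Qed.

Lemma monodromy_on_rcons_entry h mu lam (s : seq 'I_L) x u y v : j \notin s ->
  monodromy_on g h mu lam (rcons s j) (x, u) (y, v) =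
  \sum_(x' : 'I_2) \sum_(c : 'I_2) Rmat g (lam - mu j) x (u j) x' c *
    \sum_(y' : 'I_2) monodromy_on g h mu lam s (x', set_site u j i1) (y', set_site v j i1) *
       Rmat g (lam + mu j) y' c y (v j).
Proof.
move=> njs; have triv := trivial_at_monodromy_on g j h mu lam _ njs.
rewrite monodromy_on_rcons {1}/opmul sum_R0l.
apply: eq_bigr => x' _; apply: eq_bigr => c _; congr (_ * _).
rewrite /opmul sum_R0r; apply: eq_bigr => y' _.
rewrite (bigD1 c) //= big1 ?addr0 => [|c' nc].
  by rewrite (trivial_at_set_site triv) eqxx mul1r.
by rewrite (trivial_at_set_site triv) eq_sym (negbTE nc) !mul0r.
Qed.

End SingleSite.

Definition tensor4 := 'I_2 -> 'I_2 -> 'I_2 -> 'I_2 -> C.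

(* (xa, ya) and (xb, yb) are the auxiliary indices of the double rows at l1 and
   l2.  The site enters the first row in state 1 (from <bar0|), passes to the
   second row in state s and leaves it in state t. *)
Definition transfer (g l1 l2 m : C) (t : 'I_2) (v : tensor4) : tensor4 :=
  fun xa xb ya yb =>
  \sum_(s : 'I_2) \sum_(xa' : 'I_2) \sum_(xb' : 'I_2) \sum_(ya' : 'I_2) \sum_(yb' : 'I_2)
    (\sum_(c : 'I_2) Rmat g (l1 - m) xa i1 xa' c * Rmat g (l1 + m) ya' c ya s) *
    (\sum_(c : 'I_2) Rmat g (l2 - m) xb s xb' c * Rmat g (l2 + m) yb' c yb t) *
    v xa' xb' ya' yb'.

Section TransferLinear.

Variables (g l1 l2 m : C) (t : 'I_2).

Lemma eq_transfer (v w : tensor4) xa xb ya yb :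
  (forall a b c d, v a b c d = w a b c d) ->
  transfer g l1 l2 m t v xa xb ya yb = transfer g l1 l2 m t w xa xb ya yb.
Proof. by move=> vw; rewrite /transfer; do 5 (apply: eq_bigr => ? _); rewrite vw. Qed.

Lemma transfer_sum (I : finType) (V : I -> tensor4) xa xb ya yb :
  transfer g l1 l2 m t (fun a b c d => \sum_(p : I) V p a b c d) xa xb ya yb =
  \sum_(p : I) transfer g l1 l2 m t (V p) xa xb ya yb.
Proof.
rewrite /transfer; do 5 (rewrite [RHS]exchange_big; apply: eq_bigr => ? _).
by rewrite mulr_sumr.
Qed.

Lemma transferZ k (v : tensor4) xa xb ya yb :
  transfer g l1 l2 m t (fun a b c d => k * v a b c d) xa xb ya yb =
  k * transfer g l1 l2 m t v xa xb ya yb.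
Proof. by rewrite /transfer !sum_ord2; ring. Qed.

Lemma transferD (v w : tensor4) xa xb ya yb :
  transfer g l1 l2 m t (fun a b c d => v a b c d + w a b c d) xa xb ya yb =
  transfer g l1 l2 m t v xa xb ya yb + transfer g l1 l2 m t w xa xb ya yb.
Proof. by rewrite /transfer !sum_ord2; ring. Qed.

End TransferLinear.

Definition Kdiag (h lam : C) (x : 'I_2) : C :=
  if x == 0 then csinh (h + lam) else csinh (h - lam).

Definition Kvec (h l1 l2 : C) : tensor4 := fun xa xb ya yb =>
  (xa == ya)%:R * (xb == yb)%:R * Kdiag h l1 xa * Kdiag h l2 xb.

Section TwoRow.

Context {L : nat}.
Variables (g h : C) (mu : nat -> C) (l1 l2 : C).

Definition two_row (s : seq 'I_L) (xa xb ya yb : 'I_2) (q : stQ L) : C :=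
  \sum_(p : stQ L) monodromy_on g h mu l1 s (xa, bvac L) (ya, p) *
                   monodromy_on g h mu l2 s (xb, p) (yb, q).

Lemma two_row_nil xa xb ya yb q :
  two_row [::] xa xb ya yb q = (q == bvac L)%:R * Kvec h l1 l2 xa xb ya yb.
Proof.
rewrite /two_row !monodromy_on_nil (bigD1 (bvac L)) //= big1 ?addr0 => [|p np]; last first.
  by rewrite {1}/Kop xpair_eqE [bvac L == p]eq_sym (negbTE np) andbF mul0r.
rewrite /Kop /Kvec /Kdiag !xpair_eqE eqxx andbT [q == _]eq_sym.
by case: (xa == ya); case: (xb == yb); case: (bvac L == q);
  rewrite /= ?mulr1n ?mulr0n ?mul1r ?mul0r ?mulr0.
Qed.

Lemma two_row_rcons (s : seq 'I_L) j xa xb ya yb q : j \notin s ->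
  two_row (rcons s j) xa xb ya yb q =
  transfer g l1 l2 (mu j) (q j) (fun a b c d => two_row s a b c d (set_site q j i1))
    xa xb ya yb.
Proof.
move=> njs; rewrite /two_row transfer_sum.
under eq_bigr do rewrite !monodromy_on_rcons_entry //.
rewrite bvac_at set_site_bvac.
rewrite (@sum_split_site L j (fun t p =>
  (\sum_(x' < 2) \sum_(c < 2) Rmat g (l1 - mu j) xa i1 x' c *
      \sum_(y' < 2) monodromy_on g h mu l1 s (x', bvac L) (y', p) *
        Rmat g (l1 + mu j) y' c ya t) *
  (\sum_(x' < 2) \sum_(c < 2) Rmat g (l2 - mu j) xb t x' c *
      \sum_(y' < 2) monodromy_on g h mu l2 s (x', p) (y', set_site q j i1) *
        Rmat g (l2 + mu j) y' c yb (q j)))).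
  by apply: eq_bigr => p _; rewrite /transfer !sum_ord2; ring.
move=> t p npj; have [triv _] := trivial_at_monodromy_on g j h mu l1 _ njs.
rewrite [X in X * _]big1 ?mul0r // => x' _; rewrite big1 // => c _.
by rewrite big1 ?mulr0 // => y' _; rewrite triv ?mul0r // bvac_at eq_sym.
Qed.

End TwoRow.

Definition seed (g h m0 l2 : C) (t : 'I_2) : tensor4 :=
  transfer g (m0 - g) l2 m0 t (Kvec h (m0 - g) l2).

Definition seed_stable (g h m0 l2 : C) (al be de : C -> C) :=
  forall m xa xb ya yb,
  [/\ transfer g (m0 - g) l2 m i1 (seed g h m0 l2 i1) xa xb ya yb
        = al m * seed g h m0 l2 i1 xa xb ya yb,
      transfer g (m0 - g) l2 m i1 (seed g h m0 l2 i0) xa xb ya yb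
        = de m * seed g h m0 l2 i0 xa xb ya yb,
      transfer g (m0 - g) l2 m i0 (seed g h m0 l2 i1) xa xb ya yb
        = be m * seed g h m0 l2 i0 xa xb ya yb &
      transfer g (m0 - g) l2 m i0 (seed g h m0 l2 i0) xa xb ya yb = 0].

Lemma two_row_seed_span {L : nat} {g h : C} {mu : nat -> C} {l2 : C} {al be de : C -> C}
  (j0 : 'I_L) :
  j0 = 0%N :> nat -> seed_stable g h (mu 0%N) l2 al be de ->
  forall r, uniq (j0 :: r) -> exists c1 c0 : stQ L -> C, forall xa xb ya yb q,
    two_row g h mu (mu 0%N - g) l2 (j0 :: r) xa xb ya yb q =
      c1 q * seed g h (mu 0%N) l2 i1 xa xb ya yb + c0 q * seed g h (mu 0%N) l2 i0 xa xb ya yb.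
Proof.
move=> j0_0 stable; elim/last_ind => [_ | r j IH].
  exists (fun q : stQ L => (q j0 == i1)%:R * (set_site q j0 i1 == bvac L)%:R).
  exists (fun q : stQ L => (q j0 == i0)%:R * (set_site q j0 i1 == bvac L)%:R).
  move=> xa xb ya yb q; rewrite -[[:: j0]]/(rcons [::] j0) two_row_rcons //.
  under eq_transfer => a b c d do rewrite two_row_nil.
  rewrite transferZ j0_0 /seed.
  by case: (ord2P (q j0)) => ->; rewrite /= ?mulr1n ?mulr0n ?mul0r ?mul1r ?add0r ?addr0.
rewrite -rcons_cons rcons_uniq => /andP [nj U].
have [c1 [c0 span]] := IH U.
exists (fun q : stQ L => if q j == i1 then al (mu j) * c1 (set_site q j i1) else 0).
exists (fun q : stQ L => if q j == i1 then de (mu j) * c0 (set_site q j i1)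
                 else be (mu j) * c1 (set_site q j i1)).
move=> xa xb ya yb q; rewrite two_row_rcons //.
under eq_transfer => a b c d do rewrite span.
rewrite transferD !transferZ.
have [T11 T10 T01 T00] := stable (mu j) xa xb ya yb.
by case: (ord2P (q j)) => ->; rewrite /= ?T11 ?T10 ?T01 ?T00; ring.
Qed.

(* The entries of [transfer], computed once so that the identities below are
   checked on short explicit expressions instead of nested sums. *)
Definition transfer_table (g l1 l2 m : C) (t : 'I_2) (v : tensor4) : tensor4 :=
  fun xa xb ya yb =>
  let a1m := csinh (l1 - m + g) in let b1m := csinh (l1 - m) in
  let a1p := csinh (l1 + m + g) in let b1p := csinh (l1 + m) in
  let a2m := csinh (l2 - m + g) in let b2m := csinh (l2 - m) in
  let a2p := csinh (l2 + m + g) in let b2p := csinh (l2 + m) in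
  let cg := csinh g in
  match nat_of_ord t, nat_of_ord xa, nat_of_ord xb, nat_of_ord ya, nat_of_ord yb with
  | 0, 0, 0, 0, 0 => cg * a1p * a2m * a2p * v i1 i0 i0 i0
                     + b1m * b1p * cg * a2p * v i0 i1 i0 i0
                     + cg * cg * cg * a2p * v i1 i1 i1 i0
  | 0, 0, 0, 0, 1 => cg * a1p * a2m * b2p * v i1 i0 i0 i1
                     + b1m * b1p * b2m * cg * v i0 i0 i0 i0
                     + b1m * b1p * cg * b2p * v i0 i1 i0 i1
                     + cg * cg * b2m * cg * v i1 i0 i1 i0
                     + cg * cg * cg * b2p * v i1 i1 i1 i1
  | 0, 0, 0, 1, 0 => b1m * cg * a2m * a2p * v i0 i0 i0 i0
                     + cg * b1p * a2m * a2p * v i1 i0 i1 i0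
                     + b1m * a1p * cg * a2p * v i0 i1 i1 i0
  | 0, 0, 0, 1, 1 => b1m * cg * a2m * b2p * v i0 i0 i0 i1
                     + cg * b1p * a2m * b2p * v i1 i0 i1 i1
                     + b1m * a1p * b2m * cg * v i0 i0 i1 i0
                     + b1m * a1p * cg * b2p * v i0 i1 i1 i1
  | 0, 0, 1, 0, 0 => cg * a1p * b2m * a2p * v i1 i1 i0 i0
  | 0, 0, 1, 0, 1 => cg * a1p * cg * cg * v i1 i0 i0 i0
                     + cg * a1p * b2m * b2p * v i1 i1 i0 i1
                     + b1m * b1p * a2m * cg * v i0 i1 i0 i0
                     + cg * cg * a2m * cg * v i1 i1 i1 i0
  | 0, 0, 1, 1, 0 => b1m * cg * b2m * a2p * v i0 i1 i0 i0
                     + cg * b1p * b2m * a2p * v i1 i1 i1 i0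
  | 0, 0, 1, 1, 1 => b1m * cg * cg * cg * v i0 i0 i0 i0
                     + b1m * cg * b2m * b2p * v i0 i1 i0 i1
                     + cg * b1p * cg * cg * v i1 i0 i1 i0
                     + cg * b1p * b2m * b2p * v i1 i1 i1 i1
                     + b1m * a1p * a2m * cg * v i0 i1 i1 i0
  | 0, 1, 0, 0, 0 => a1m * b1p * cg * a2p * v i1 i1 i0 i0
  | 0, 1, 0, 0, 1 => a1m * b1p * b2m * cg * v i1 i0 i0 i0
                     + a1m * b1p * cg * b2p * v i1 i1 i0 i1
  | 0, 1, 0, 1, 0 => a1m * cg * a2m * a2p * v i1 i0 i0 i0
                     + a1m * a1p * cg * a2p * v i1 i1 i1 i0
  | 0, 1, 0, 1, 1 => a1m * cg * a2m * b2p * v i1 i0 i0 i1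
                     + a1m * a1p * b2m * cg * v i1 i0 i1 i0
                     + a1m * a1p * cg * b2p * v i1 i1 i1 i1
  | 0, 1, 1, 0, 1 => a1m * b1p * a2m * cg * v i1 i1 i0 i0
  | 0, 1, 1, 1, 0 => a1m * cg * b2m * a2p * v i1 i1 i0 i0
  | 0, 1, 1, 1, 1 => a1m * cg * cg * cg * v i1 i0 i0 i0
                     + a1m * cg * b2m * b2p * v i1 i1 i0 i1
                     + a1m * a1p * a2m * cg * v i1 i1 i1 i0
  | 1, 0, 0, 0, 0 => cg * a1p * a2m * cg * v i1 i0 i0 i1
                     + b1m * b1p * b2m * b2p * v i0 i0 i0 i0
                     + b1m * b1p * cg * cg * v i0 i1 i0 i1
                     + cg * cg * b2m * b2p * v i1 i0 i1 i0
                     + cg * cg * cg * cg * v i1 i1 i1 i1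
  | 1, 0, 0, 0, 1 => b1m * b1p * b2m * a2p * v i0 i0 i0 i1
                     + cg * cg * b2m * a2p * v i1 i0 i1 i1
  | 1, 0, 0, 1, 0 => b1m * cg * a2m * cg * v i0 i0 i0 i1
                     + cg * b1p * a2m * cg * v i1 i0 i1 i1
                     + b1m * a1p * b2m * b2p * v i0 i0 i1 i0
                     + b1m * a1p * cg * cg * v i0 i1 i1 i1
  | 1, 0, 0, 1, 1 => b1m * a1p * b2m * a2p * v i0 i0 i1 i1
  | 1, 0, 1, 0, 0 => cg * a1p * cg * b2p * v i1 i0 i0 i0
                     + cg * a1p * b2m * cg * v i1 i1 i0 i1
                     + b1m * b1p * a2m * b2p * v i0 i1 i0 i0
                     + cg * cg * a2m * b2p * v i1 i1 i1 i0
  | 1, 0, 1, 0, 1 => cg * a1p * cg * a2p * v i1 i0 i0 i1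
                     + b1m * b1p * a2m * a2p * v i0 i1 i0 i1
                     + cg * cg * a2m * a2p * v i1 i1 i1 i1
  | 1, 0, 1, 1, 0 => b1m * cg * cg * b2p * v i0 i0 i0 i0
                     + b1m * cg * b2m * cg * v i0 i1 i0 i1
                     + cg * b1p * cg * b2p * v i1 i0 i1 i0
                     + cg * b1p * b2m * cg * v i1 i1 i1 i1
                     + b1m * a1p * a2m * b2p * v i0 i1 i1 i0
  | 1, 0, 1, 1, 1 => b1m * cg * cg * a2p * v i0 i0 i0 i1
                     + cg * b1p * cg * a2p * v i1 i0 i1 i1
                     + b1m * a1p * a2m * a2p * v i0 i1 i1 i1
  | 1, 1, 0, 0, 0 => a1m * b1p * b2m * b2p * v i1 i0 i0 i0
                     + a1m * b1p * cg * cg * v i1 i1 i0 i1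
  | 1, 1, 0, 0, 1 => a1m * b1p * b2m * a2p * v i1 i0 i0 i1
  | 1, 1, 0, 1, 0 => a1m * cg * a2m * cg * v i1 i0 i0 i1
                     + a1m * a1p * b2m * b2p * v i1 i0 i1 i0
                     + a1m * a1p * cg * cg * v i1 i1 i1 i1
  | 1, 1, 0, 1, 1 => a1m * a1p * b2m * a2p * v i1 i0 i1 i1
  | 1, 1, 1, 0, 0 => a1m * b1p * a2m * b2p * v i1 i1 i0 i0
  | 1, 1, 1, 0, 1 => a1m * b1p * a2m * a2p * v i1 i1 i0 i1
  | 1, 1, 1, 1, 0 => a1m * cg * cg * b2p * v i1 i0 i0 i0
                     + a1m * cg * b2m * cg * v i1 i1 i0 i1
                     + a1m * a1p * a2m * b2p * v i1 i1 i1 i0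
  | 1, 1, 1, 1, 1 => a1m * cg * cg * a2p * v i1 i0 i0 i1
                     + a1m * a1p * a2m * a2p * v i1 i1 i1 i1
  | _, _, _, _, _ => 0
  end.

Lemma transferE g l1 l2 m t v xa xb ya yb :
  transfer g l1 l2 m t v xa xb ya yb = transfer_table g l1 l2 m t v xa xb ya yb.
Proof.
rewrite /transfer !sum_ord2.
by have [->|->] := ord2P t; have [->|->] := ord2P xa; have [->|->] := ord2P xb;
  have [->|->] := ord2P ya; have [->|->] := ord2P yb; rewrite /transfer_table /Rmat /=; ring.
Qed.

Ltac seed_stable_by_table :=
  move=> m xa xb ya yb;
  have [->|->] := ord2P xa; have [->|->] := ord2P xb;
  have [->|->] := ord2P ya; have [->|->] := ord2P yb;
  split; rewrite /seed !transferE /transfer_table /= ?transferE /transfer_table /Kvec /Kdiag /=;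
  sinh_field.

Lemma seed_stable_mu g h m0 :
  seed_stable g h m0 m0
    (fun m => csinh (m0 - g - m) * csinh (m0 - g + m) * csinh (m0 - m + g) * csinh (m0 + m + g))
    (fun m => csinh (m0 - g - m) * csinh (m0 - g + m) * csinh (m0 + m + g) * csinh g)
    (fun m => csinh (m0 - m) * csinh (m0 - g - m) * csinh (m0 - g + m) * csinh (m0 + m + g)).
Proof. seed_stable_by_table. Qed.

Lemma seed_stable_neg_mu g h m0 :
  seed_stable g h m0 (- m0 - g)
    (fun m => csinh (m0 - g - m) * csinh (m0 - g + m) * csinh (- m0 - g - m) * csinh (- m0 - g + m))
    (fun m => - (csinh (m0 - g - m) * csinh (m0 - g + m) * csinh (- m0 - g - m) * csinh g))
    (fun m => csinh (m0 - g - m) * csinh (m0 - g + m) * csinh (- m0 - g - m) * csinh (- m0 + m)).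
Proof. seed_stable_by_table. Qed.

Lemma seed_BB_eq0 g h m0 l2 t : seed g h m0 l2 t i0 i0 i1 i1 = 0.
Proof. by case: (ord2P t) => ->; rewrite /seed transferE /transfer_table /Kvec /=; ring. Qed.

Lemma Zpf_eq0_of_two_row L g h (mu lam : nat -> C) : (2 <= L)%N ->
  (forall q, two_row g h mu (lam 0%N) (lam 1%N) (enum 'I_L) i0 i0 i1 i1 q = 0) ->
  Zpf L g h mu lam = 0.
Proof.
case: L => [|[|n]] // _ BB0.
rewrite /Zpf /= {1}/opmul.
under eq_bigr do rewrite /opmul big_distrr /=.
rewrite exchange_big /=; apply: big1 => q _.
under eq_bigr do rewrite mulrA.
rewrite -big_distrl /= [X in X * _](_ : _ = 0) ?mul0r // /Bop.
have -> : (0 : 'I_2) = i0 by apply: val_inj.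
have -> : (1 : 'I_2) = i1 by apply: val_inj.
exact: BB0.
Qed.

Theorem lemma3 (L : nat) (g h : C) (mu lam : nat -> C) :
  (2 <= L)%N ->
  lam 0%N = mu 0%N - g ->
  (lam 1%N = mu 0%N \/ lam 1%N = - mu 0%N - g) ->
  Zpf L g h mu lam = 0.
Proof.
move=> L2 lam0 lam1; apply: Zpf_eq0_of_two_row => // q.
have [al [be [de stable]]] : exists al be de, seed_stable g h (mu 0%N) (lam 1%N) al be de.
  by case: lam1 => ->; do 3 eexists; [exact: seed_stable_mu | exact: seed_stable_neg_mu].
case: L L2 q => [// | L] _ q.
have U : uniq (ord0 :: map (lift ord0) (enum 'I_L)) by rewrite -enum_ordSl enum_uniq.
rewrite lam0 enum_ordSl.
have [c1 [c0 ->]] := two_row_seed_span ord0 erefl stable _ U.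
by rewrite !seed_BB_eq0 !mulr0 addr0.
Qed.
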